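(* Let $\lambda$ be an irreducible representation of $S_n$ with $d_\lambda > e^{-\sqrt{n}\log n}\sqrt{n!}$. Then the width and the height of the Young diagram of $\lambda$ are both less than $4\sqrt{n}\log n$.
   Context: Irreps of $S_n$ are indexed by Young diagrams (partitions $\lambda_1\ge\lambda_2\ge\cdots$ of $n$); the width is the length of the first row $\lambda_1$ and the height is the number of rows. $d_\lambda$ is the dimension of the irrep; $\log$ is the natural logarithm. *)

From HB Require Import structures.
From mathcomp Require Import all_boot all_order all_algebra.
From mathcomp Require Import all_classical all_reals all_analysis.
Set Implicit Arguments. Unset Strict Implicit. Unset Printing Implicit Defensive.

Definition is_partition (n : nat) (la : seq nat) : bool :=
  [&& sorted geq la, all (fun r => 0 < r) la & sumn la == n].

Definition yd_width (la : seq nat) : nat := head 0 la.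
Definition yd_height (la : seq nat) : nat := size la.

Definition in_diagram (la : seq nat) (c : nat * nat) : bool :=
  (c.1 < size la) && (c.2 < nth 0 la c.1).

(* A standard Young tableau of shape la with entries 0..n-1, encoded by the
   position t k of entry k: t is injective, lands in the diagram, and entries
   increase along rows and down columns (k placed weakly north-west of l
   forces k <= l). Since #cells = n, t is then a bijection onto the cells. *)
Definition is_syt (n : nat) (la : seq nat) (t : {ffun 'I_n -> 'I_n * 'I_n}) : bool :=
  [&& injectiveb t,
      [forall k, in_diagram la ((t k).1 : nat, (t k).2 : nat)] &
      [forall k, forall l,
         (((t k).1 <= (t l).1) && ((t k).2 <= (t l).2))%N ==> (k <= l)%N]].

(* d_lambda = dimension of the irrep of S_n indexed by la
   = number of standard Young tableaux of shape la. *)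
Definition dim_irrep (n : nat) (la : seq nat) : nat :=
  #|[set t : {ffun 'I_n -> 'I_n * 'I_n} | is_syt la t]|.

From HB Require Import structures.
From mathcomp Require Import all_boot all_order all_algebra.
From mathcomp Require Import all_classical all_reals all_analysis.
Import Order.TTheory GRing.Theory Num.Theory.
From mathcomp Require Import zify ring lra.
Set Implicit Arguments. Unset Strict Implicit. Unset Printing Implicit Defensive.

(* Pad la with zero rows so that it lives in the Young lattice of shapes with
   at most n rows.  A standard tableau is determined by the removable corner
   holding its largest entry and by the tableau left after deleting it, so d_la
   is at most the number f(la) of up-paths from the empty shape to la.  The
   commutation relation DU = UD + I between the up and down operators gives
   sum_{|mu| = m} f(mu)^2 = m!, hence f(mu)^2 <= m!.  Deleting the first row
   (length w) or the first column (length h) shows f(la) <= C(n,k) f(mu) with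
   |mu| = n - k for k = w, h, so d_la^2 <= C(n,k)^2 (n-k)!.  As n! = C(n,k) k! (n-k)!
   and C(n,k) k! <= n^k, the hypothesis gives exp(-2 sqrt n log n) (k!)^2 < n^k.
   Since k! >= (k/e)^k, k >= 4 sqrt n log n would force
   16 n log^2 n <= k^2 < e^(5/2) n < 23 n, impossible once log n > 6/5, i.e.
   for n >= 4; the cases n <= 3 are checked directly. *)

Lemma nth_le_sumn s i : nth 0 s i <= sumn s.
Proof. by elim: s i => [|x s IH] [|i] //=; [lia | have := IH i; lia]. Qed.

Lemma set_nth_id (T : Type) (x0 : T) s i : i < size s -> set_nth x0 s i (nth x0 s i) = s.
Proof.
move=> lt_i; apply: (@eq_from_nth _ x0) => [|j _]; first by rewrite size_set_nth; lia.
by rewrite nth_set_nth /=; case: eqP => [->|].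
Qed.

Lemma nth_gt0_size s i : 0 < nth 0 s i -> i < size s.
Proof. by move=> pos_i; rewrite ltnNge; apply: contraTN pos_i => /(nth_default 0) ->. Qed.

Lemma sum_natD1 (n j : nat) (P : pred nat) (F : nat -> nat) : j < n ->
  \sum_(0 <= i < n | P i) F i = (if P j then F j else 0) + \sum_(0 <= i < n | P i && (i != j)) F i.
Proof.
move=> lt_j; rewrite big_mkcond (bigD1_seq j) ?mem_iota ?iota_uniq //=; last by lia.
congr (_ + _); rewrite [RHS]big_mkcond [LHS]big_mkcond; apply: eq_bigr => i _.
by case: (P i); case: (i != j).
Qed.

Lemma sum_nat_mkcond2 (n : nat) (A : pred nat) (B : nat -> pred nat) (F : nat -> nat -> nat) :
  \sum_(0 <= i < n | A i) \sum_(0 <= j < n | B i j) F i j =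
  \sum_(0 <= i < n) \sum_(0 <= j < n) (if A i && B i j then F i j else 0).
Proof.
rewrite big_mkcond; apply: eq_bigr => i _.
by case: (A i); [rewrite big_mkcond | rewrite big1].
Qed.

Lemma leq_add_binS n k a b x : 0 < k ->
  a <= 'C(n, k.-1) * x -> b <= 'C(n, k) * x -> a + b <= 'C(n.+1, k) * x.
Proof. by case: k => // k _ le_a le_b; rewrite binS mulnDl addnC leq_add. Qed.

Lemma pair_nat_inj p (a b : 'I_p * 'I_p) : (a.1 : nat) = b.1 -> (a.2 : nat) = b.2 -> a = b.
Proof. by case: a b => [a1 a2] [b1 b2] /= e1 e2; congr pair; apply: val_inj. Qed.

Lemma sum_nth_le_sumn p s : \sum_(i < p) nth 0 s i <= sumn s.
Proof.
elim: s p => [|x s IH] [|p]; rewrite ?big_ord0 //.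
  by rewrite big1 // => i _; rewrite nth_nil.
by rewrite big_ord_recl /= leq_add2l (eq_bigr (fun i : 'I_p => nth 0 s i)) ?IH.
Qed.

Lemma sum_ord_ltn p a : \sum_(c < p) (c < a : nat) = minn a p.
Proof. by elim: p => [|p IH]; rewrite ?big_ord0 ?big_ord_recr /= ?IH; lia. Qed.

Lemma size_le_sumn s : all (fun r => 0 < r) s -> size s <= sumn s.
Proof. by elim: s => [|x s IH] //= /andP [x_gt0 /IH]; lia. Qed.

Lemma leq_sq_mul d c g f : d <= c * g -> g * g <= f -> d * d <= c * c * f.
Proof.
move=> le_d le_g; apply: leq_trans (leq_mul le_d le_d) _.
by rewrite mulnACA leq_mul2l le_g orbT.
Qed.

Lemma ffact_le_expn n k : n ^_ k <= n ^ k.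
Proof.
rewrite ffact_prod; apply: (@leq_trans (\prod_(i < k) n)); last by rewrite prod_nat_const card_ord.
by apply: leq_prod => i _; exact: leq_subr.
Qed.

Definition add_box (s : seq nat) (i : nat) := set_nth 0 s i (nth 0 s i).+1.
Definition del_box (s : seq nat) (j : nat) := set_nth 0 s j (nth 0 s j).-1.
Definition addable (s : seq nat) (i : nat) := (i == 0) || (nth 0 s i < nth 0 s i.-1).
Definition removable (s : seq nat) (j : nat) := nth 0 s j.+1 < nth 0 s j.

Lemma nth_add_box s i j : nth 0 (add_box s i) j = (i == j) + nth 0 s j.
Proof. by rewrite nth_set_nth /=; case: eqVneq => [->|]; rewrite ?eqxx // eq_sym => /negbTE ->. Qed.

Lemma nth_del_box s i j :
  nth 0 (del_box s i) j = if j == i then (nth 0 s i).-1 else nth 0 s j.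
Proof. exact: nth_set_nth. Qed.

Lemma size_add_box s i : i < size s -> size (add_box s i) = size s.
Proof. by move=> lt_i; rewrite size_set_nth; lia. Qed.

Lemma sumn_add_box s i : sumn (add_box s i) = (sumn s).+1.
Proof. by rewrite sumn_set_nth0; have := nth_le_sumn s i; lia. Qed.

Lemma sumn_del_box s i : 0 < nth 0 s i -> sumn (del_box s i) = (sumn s).-1.
Proof. by rewrite sumn_set_nth0; have := nth_le_sumn s i; lia. Qed.

Lemma add_del_boxC s i j : i != j -> del_box (add_box s i) j = add_box (del_box s j) i.
Proof.
move=> ne_ij; rewrite /del_box nth_add_box (negbTE ne_ij) /add_box nth_del_box.
by rewrite (negbTE ne_ij) [LHS]set_set_nth (negbTE ne_ij).
Qed.

Lemma add_boxK s i : i < size s -> del_box (add_box s i) i = s.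
Proof. by move=> lt_i; rewrite /del_box nth_add_box eqxx /add_box set_set_nth eqxx set_nth_id. Qed.

Lemma del_boxK s i : 0 < nth 0 s i -> add_box (del_box s i) i = s.
Proof.
move=> pos_i; have lt_i := nth_gt0_size pos_i.
by rewrite /add_box nth_del_box eqxx prednK // /del_box set_set_nth eqxx set_nth_id.
Qed.

Lemma removable_gt0 s j : removable s j -> 0 < nth 0 s j.
Proof. by rewrite /removable; lia. Qed.

Section YoungLattice.

Variable N : nat.

Definition shape (s : seq nat) : bool :=
  (size s == N) && all (fun i => nth 0 s i.+1 <= nth 0 s i) (iota 0 N).

Definition empty_shape := nseq N 0.

Lemma shapeP s : reflect (size s = N /\ forall i, nth 0 s i.+1 <= nth 0 s i) (shape s).
Proof.
apply: (iffP andP) => [[/eqP sz /allP h] | [sz h]]; last first.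
  by rewrite sz eqxx; split => //; apply/allP => i _; exact: h.
split=> // i; case: (ltnP i N) => lt_i; first by apply: h; rewrite mem_iota.
by rewrite [nth 0 s i.+1]nth_default // sz; lia.
Qed.

Lemma shape_nth_mono s i j : shape s -> i <= j -> nth 0 s j <= nth 0 s i.
Proof.
move=> /shapeP [_ h] /subnK <-; elim: (j - i) => [|k IH] //=.
by rewrite addSn; apply: leq_trans (h _) IH.
Qed.

Lemma eq_shape s t : shape s -> shape t -> nth 0 s =1 nth 0 t -> s = t.
Proof.
move=> /shapeP [ss _] /shapeP [st _] e.
by apply: (@eq_from_nth _ 0) => [|i _]; rewrite ?ss ?st ?e.
Qed.

Lemma shape_empty : shape empty_shape.
Proof. by apply/shapeP; rewrite size_nseq; split=> // i; rewrite !nth_nseq !if_same. Qed.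

Lemma shape_add_box s i : shape s -> i < N -> addable s i -> shape (add_box s i).
Proof.
move=> /shapeP [sz h] lt_i; rewrite /addable => a_i; apply/shapeP.
split=> [|j]; first by rewrite size_add_box sz.
rewrite !nth_add_box; have := h j; case: (eqVneq i j.+1) => [e|ne].
  by move: a_i; rewrite e /= (gtn_eqF (ltnSn j)); lia.
by case: (i == j) => /=; lia.
Qed.

Lemma shape_del_box s j : shape s -> removable s j -> shape (del_box s j).
Proof.
move=> s_s r_j; have /shapeP [sz h] := s_s; have := removable_gt0 r_j.
move: r_j; rewrite /removable => r_j pos_j; apply/shapeP; split=> [|i].
  by rewrite size_set_nth sz; apply/maxn_idPr; rewrite -sz nth_gt0_size.
rewrite !nth_del_box; have := h i.
by case: (eqVneq i.+1 j) => [e|ne]; case: (eqVneq i j) => [e1|ne1] //=; subst; lia.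
Qed.

Lemma removable_add_box s i : shape s -> removable (add_box s i) i.
Proof.
move=> /shapeP [_ h]; rewrite /removable !nth_add_box eqxx (ltn_eqF (ltnSn i)) /=.
by have := h i; lia.
Qed.

Lemma addable_del_box s j : shape s -> removable s j -> addable (del_box s j) j.
Proof.
move=> /shapeP [_ h] r_j; rewrite /addable; case: eqP => //= ne.
rewrite !nth_del_box eqxx (_ : (j.-1 == j) = false); last by apply/eqP; lia.
by move: r_j; rewrite /removable; have := h j.-1; rewrite prednK; lia.
Qed.

Lemma up_edgeE t lam i : shape t -> shape lam -> i < N ->
  (addable t i && (add_box t i == lam)) = (removable lam i && (t == del_box lam i)).
Proof.
move=> s_t s_lam lt_i; have /shapeP [sz _] := s_t.
apply/andP/andP => [[_ /eqP <-] | [r_i /eqP ->]].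
  by rewrite removable_add_box // add_boxK ?sz.
by rewrite addable_del_box // del_boxK // removable_gt0.
Qed.

Lemma addable_removableC s i j : shape s -> i != j ->
  (addable s i && removable (add_box s i) j) = (removable s j && addable (del_box s j) i).
Proof.
move=> s_s ne; rewrite /addable /removable !nth_add_box !nth_del_box (negbTE ne).
case: i ne => [|i] ne /=; first by rewrite andbT.
case: (eqVneq i j) => [e|ne2].
  by subst; rewrite eqxx /=; apply/idP/idP => /andP [? ?]; apply/andP; split; lia.
by rewrite eqSS (negbTE ne2) /= add0n andbC.
Qed.

Lemma shape_sumn s : shape s -> sumn s = \sum_(0 <= i < N) nth 0 s i.
Proof. by move=> /shapeP [sz _]; rewrite sumnE (big_nth 0) sz. Qed.

Lemma shape_sumn0 s : shape s -> sumn s = 0 -> s = empty_shape.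
Proof.
move=> s_s s0; apply: eq_shape => // [|i]; first exact: shape_empty.
by rewrite nth_nseq; have := nth_le_sumn s i; rewrite s0; case: ifP; lia.
Qed.

Lemma shape_last_row0 s : shape s -> sumn s < N -> nth 0 s N.-1 = 0.
Proof.
move=> s_s; rewrite shape_sumn // => lt_N.
have : \sum_(0 <= i < N) nth 0 s N.-1 <= \sum_(0 <= i < N) nth 0 s i.
  rewrite big_nat_cond [X in _ <= X]big_nat_cond; apply: leq_sum => i /andP [/andP [_ lt_i] _].
  by apply: shape_nth_mono; lia.
rewrite sum_nat_const_nat; nia.
Qed.

Lemma count_addable s : shape s -> sumn s < N ->
  \sum_(0 <= i < N | addable s i) 1 = (\sum_(0 <= j < N | removable s j) 1).+1.
Proof.
move=> s_s lt_N; have N_gt0 : 0 < N by lia.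
have last0 := shape_last_row0 s_s lt_N.
rewrite big_mkcond big_ltn //= big_add1 /= [in RHS]big_mkcond -(prednK N_gt0).
by rewrite big_nat_recr //= /removable last0 /= addn0 add1n.
Qed.

Fixpoint upsum (k : nat) (G : seq nat -> nat) (s : seq nat) : nat :=
  if k is k'.+1 then \sum_(0 <= i < N | addable s i) upsum k' G (add_box s i) else G s.

Definition npaths (n : nat) (lam : seq nat) : nat :=
  upsum n (fun t => (t == lam) : nat) empty_shape.

Lemma leq_upsum k G G' s : (forall t, shape t -> G t <= G' t) -> shape s ->
  upsum k G s <= upsum k G' s.
Proof.
move=> le_G; elim: k s => [|k IH] s s_s /=; first exact: le_G.
rewrite big_nat_cond [X in _ <= X]big_nat_cond; apply: leq_sum => i /andP [/andP [_ lt_i] a_i].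
by apply: IH; apply: shape_add_box.
Qed.

Lemma eq_upsum k G G' s : (forall t, shape t -> G t = G' t) -> shape s ->
  upsum k G s = upsum k G' s.
Proof. by move=> eq_G s_s; apply/eqP; rewrite eqn_leq !leq_upsum // => t /eq_G ->. Qed.

Lemma upsumZ k c G s : upsum k (fun t => c * G t) s = c * upsum k G s.
Proof. by elim: k s => [|k IH] s //=; rewrite big_distrr; apply: eq_bigr => i _. Qed.

Lemma upsum_sum k (P : pred nat) (F : nat -> seq nat -> nat) s :
  upsum k (fun t => \sum_(0 <= j < N | P j) F j t) s = \sum_(0 <= j < N | P j) upsum k (F j) s.
Proof.
elim: k s => [|k IH] s //=; rewrite -exchange_big_nat /=.
by apply: eq_bigr => i _; exact: IH.
Qed.

Lemma upsumSr k G s :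
  upsum k.+1 G s = upsum k (fun t => \sum_(0 <= i < N | addable t i) G (add_box t i)) s.
Proof. by elim: k s => [|k IH] s //=; apply: eq_bigr => i _; exact: IH. Qed.

Lemma npaths0 lam : npaths 0 lam = (empty_shape == lam).
Proof. by []. Qed.

Lemma npathsS m lam : shape lam ->
  npaths m.+1 lam = \sum_(0 <= j < N | removable lam j) npaths m (del_box lam j).
Proof.
move=> s_lam; rewrite /npaths upsumSr -upsum_sum; apply: eq_upsum => [t s_t|]; last first.
  exact: shape_empty.
rewrite big_mkcond [RHS]big_mkcond /= big_nat_cond [RHS]big_nat_cond.
apply: eq_bigr => i /andP [/andP [_ lt_i] _].
have := up_edgeE s_t s_lam lt_i.
by case: (addable t i) (removable lam i) => [] [] /= e; rewrite ?e // -?e.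
Qed.

Lemma sum_add_del_boxC (F : seq nat -> nat) mu : shape mu ->
  \sum_(0 <= i < N | addable mu i)
     \sum_(0 <= j < N | removable (add_box mu i) j && (j != i)) F (del_box (add_box mu i) j) =
  \sum_(0 <= j < N | removable mu j)
     \sum_(0 <= i < N | addable (del_box mu j) i && (i != j)) F (add_box (del_box mu j) i).
Proof.
move=> s_mu; rewrite sum_nat_mkcond2 [RHS]sum_nat_mkcond2 exchange_big_nat /=.
apply: eq_bigr => j _; apply: eq_bigr => i _.
case: (eqVneq i j) => [->|ne]; first by rewrite !andbF.
by rewrite !andbT (addable_removableC s_mu ne) add_del_boxC.
Qed.

Lemma sum_npaths_add_boxE m mu : shape mu ->
  \sum_(0 <= i < N | addable mu i) npaths m.+1 (add_box mu i) =
  (\sum_(0 <= i < N | addable mu i) 1) * npaths m mu +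
  \sum_(0 <= j < N | removable mu j)
     \sum_(0 <= i < N | addable (del_box mu j) i && (i != j)) npaths m (add_box (del_box mu j) i).
Proof.
move=> s_mu; have /shapeP [sz _] := s_mu.
rewrite -sum_add_del_boxC // big_distrl -big_split /=.
rewrite big_nat_cond [RHS]big_nat_cond; apply: eq_bigr => i /andP [/andP [_ lt_i] a_i].
rewrite npathsS ?shape_add_box // (sum_natD1 _ _ lt_i) removable_add_box //.
by rewrite add_boxK ?sz // mul1n.
Qed.

(* The commutation relation DU = UD + I of the Young lattice, valid below rank N. *)
Lemma sum_npaths_add_box m mu : shape mu -> sumn mu = m -> m < N ->
  \sum_(0 <= i < N | addable mu i) npaths m.+1 (add_box mu i) = m.+1 * npaths m mu.
Proof.
elim: m mu => [|m IH] mu s_mu sz_mu lt_m; rewrite sum_npaths_add_boxE // count_addable ?sz_mu //.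
  have r0 j : removable mu j = false.
    by rewrite (shape_sumn0 s_mu sz_mu) /removable !nth_nseq !if_same.
  by rewrite !big_pred0 // addn0.
set r := \sum_(0 <= j < N | _) 1.
suff E : \sum_(0 <= j < N | removable mu j)
    (npaths m.+1 mu + \sum_(0 <= i < N | addable (del_box mu j) i && (i != j))
       npaths m.+1 (add_box (del_box mu j) i)) = m.+1 * npaths m.+1 mu.
  move: E; rewrite big_split /=.
  have -> : \sum_(0 <= j < N | removable mu j) npaths m.+1 mu = r * npaths m.+1 mu.
    by rewrite /r big_distrl; apply: eq_bigr => j _; rewrite /= mul1n.
  lia.
rewrite [in RHS](npathsS m s_mu) big_distrr /= big_nat_cond [RHS]big_nat_cond.
apply: eq_bigr => j /andP [/andP [_ lt_j] r_j].
have pos_j := removable_gt0 r_j.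
rewrite -IH ?shape_del_box ?sumn_del_box ?sz_mu //; last by lia.
by rewrite [in RHS](sum_natD1 _ _ lt_j) addable_del_box // del_boxK.
Qed.

Lemma upsum_npaths k m mu : shape mu -> sumn mu = m -> m + k <= N ->
  m`! * upsum k (npaths (m + k)) mu = (m + k)`! * npaths m mu.
Proof.
elim: k m mu => [|k IH] m mu s_mu sz_mu le_mk; first by rewrite !addn0.
apply/eqP; rewrite -(eqn_pmul2l (ltn0Sn m)); apply/eqP.
rewrite mulnA -factS /= big_distrr /= big_nat_cond.
rewrite (eq_bigr (fun i => (m + k.+1)`! * npaths m.+1 (add_box mu i))); last first.
  move=> i /andP [/andP [_ lt_i] a_i]; rewrite -addSnnS IH ?shape_add_box //.
    by rewrite sumn_add_box sz_mu.
  by lia.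
by rewrite -big_distrr -big_nat_cond /= sum_npaths_add_box //; [exact: mulnCA | lia].
Qed.

Lemma sum_npaths_sq n : n <= N -> upsum n (npaths n) empty_shape = n`!.
Proof.
move=> le_n; have sz0 : sumn empty_shape = 0 by rewrite sumn_nseq.
have := upsum_npaths shape_empty sz0 le_n.
by rewrite fact0 mul1n add0n npaths0 eqxx muln1.
Qed.

Lemma npaths_sq_le n lam : n <= N -> npaths n lam * npaths n lam <= n`!.
Proof.
move=> le_n; rewrite -[X in _ <= X](sum_npaths_sq le_n) /npaths -upsumZ.
by apply: leq_upsum (shape_empty) => t _; case: eqP => [->|] /=; rewrite ?muln1 ?muln0.
Qed.

Lemma shape_row0_gt0 s : shape s -> 0 < sumn s -> 0 < nth 0 s 0.
Proof.
move=> s_s; rewrite shape_sumn // !lt0n; apply: contraNN => /eqP row0.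
rewrite big1_seq // => i /andP [_]; rewrite mem_iota => /andP [le0i _].
by have := shape_nth_mono s_s le0i; rewrite row0; case: (nth 0 s i).
Qed.

Definition drop_row (s : seq nat) := rcons (behead s) 0.

Lemma nth_drop_row s i : nth 0 (drop_row s) i = nth 0 s i.+1.
Proof. by rewrite nth_rcons_default nth_behead. Qed.

Lemma shape_drop_row s : 0 < N -> shape s -> shape (drop_row s).
Proof.
move=> N_gt0 /shapeP [sz h]; apply/shapeP; rewrite size_rcons size_behead sz prednK //.
by split=> // i; rewrite !nth_drop_row.
Qed.

Lemma drop_row_del_box0 s : drop_row (del_box s 0) = drop_row s.
Proof. by case: s. Qed.

Lemma drop_row_del_box s i : i.+1 < size s ->
  drop_row (del_box s i.+1) = del_box (drop_row s) i.
Proof.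
move=> lt_i; apply: (@eq_from_nth _ 0) => [|j _].
  by rewrite !size_set_nth !size_rcons !size_behead size_set_nth; lia.
by rewrite nth_drop_row !nth_del_box !nth_drop_row eqSS.
Qed.

Lemma sum_removable_drop_row (F : seq nat -> nat) lam : shape lam ->
  \sum_(0 <= j < N | removable lam j && (j != 0)) F (drop_row (del_box lam j)) <=
  \sum_(0 <= i < N | removable (drop_row lam) i) F (del_box (drop_row lam) i).
Proof.
move=> /shapeP [sz _]; case: N sz => [|N'] sz; first by rewrite big_geq.
rewrite big_ltn_cond // andbF big_add1 /= [X in _ <= X](@big_cat_nat _ _ _ N') //=.
apply: leq_trans _ (leq_addr _ _); apply/eq_leq/eq_big => [j|j /andP [r_j _]].
  by rewrite andbT /removable !nth_drop_row.
by rewrite drop_row_del_box // nth_gt0_size ?removable_gt0.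
Qed.

Lemma npaths_drop_row_le n lam : 0 < N -> shape lam -> sumn lam = n ->
  npaths n lam <= 'C(n, nth 0 lam 0) * npaths (n - nth 0 lam 0) (drop_row lam).
Proof.
move=> N_gt0; elim: n lam => [|n IH] lam s_lam sz_lam.
  have -> := shape_sumn0 s_lam sz_lam.
  have -> : drop_row empty_shape = empty_shape.
    apply: eq_shape; [exact: shape_drop_row N_gt0 shape_empty | exact: shape_empty | move=> i].
    by rewrite nth_drop_row !nth_nseq !if_same.
  by rewrite nth_nseq N_gt0 bin0 mul1n.
set k := nth 0 lam 0; have k_gt0 : 0 < k by apply: shape_row0_gt0 s_lam _; rewrite sz_lam.
have s_drop := shape_drop_row N_gt0 s_lam.
rewrite npathsS // (sum_natD1 _ _ N_gt0); apply: leq_add_binS => //.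
  case: ifP => // r_0; have := IH _ (shape_del_box s_lam r_0).
  rewrite sumn_del_box ?sz_lam // drop_row_del_box0 nth_del_box /= -/k => /(_ erefl).
  by have -> : n - k.-1 = n.+1 - k by lia.
apply: (@leq_trans (\sum_(0 <= j < N | removable lam j && (j != 0))
    'C(n, k) * npaths (n - k) (drop_row (del_box lam j)))).
  rewrite big_nat_cond [X in _ <= X]big_nat_cond; apply: leq_sum => j /andP [_ /andP [r_j ne_j]].
  have := IH _ (shape_del_box s_lam r_j).
  by rewrite sumn_del_box ?removable_gt0 // sz_lam nth_del_box eq_sym (negbTE ne_j) => /(_ erefl).
rewrite -big_distrr /=; have [le_kn | lt_nk] := leqP k n; last by rewrite bin_small // !mul0n.
by rewrite leq_mul // (subSn le_kn) npathsS //; apply: sum_removable_drop_row.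
Qed.

Definition height (s : seq nat) := index 0 s.
Definition drop_col (s : seq nat) := map predn s.

Lemma height_le_sumn s : height s <= sumn s.
Proof.
by elim: s => [|x s IH] //=; rewrite /height /=; case: eqP => //; rewrite -/(height s); lia.
Qed.

Lemma nth_gt0_height s i : shape s -> (0 < nth 0 s i) = (i < height s).
Proof.
move=> s_s; rewrite /height; case: (ltnP i (index 0 s)) => lt_i.
  by have := before_find 0 lt_i; case: (nth 0 s i).
case: (boolP (0 \in s)) => s0; first by have := shape_nth_mono s_s lt_i; rewrite nth_index //; lia.
by rewrite nth_default //; move: lt_i; rewrite memNindex.
Qed.

Lemma heightE s h : shape s -> (forall i, (0 < nth 0 s i) = (i < h)) -> height s = h.
Proof.
move=> s_s pos_h; have := pos_h h; have := pos_h (height s).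
by rewrite !nth_gt0_height // !ltnn; lia.
Qed.

Lemma nth_drop_col s i : nth 0 (drop_col s) i = (nth 0 s i).-1.
Proof.
by case: (ltnP i (size s)) => lt_i; [rewrite (nth_map 0) | rewrite !nth_default ?size_map].
Qed.

Lemma shape_drop_col s : shape s -> shape (drop_col s).
Proof.
move=> /shapeP [sz h]; apply/shapeP; rewrite size_map; split=> // i.
by rewrite !nth_drop_col; have := h i; lia.
Qed.

Lemma drop_col_del_box s j : drop_col (del_box s j) = del_box (drop_col s) j.
Proof.
apply: (@eq_from_nth _ 0) => [|i _]; first by rewrite size_map !size_set_nth size_map.
by rewrite nth_drop_col !nth_del_box !nth_drop_col; case: eqP.
Qed.

Lemma removable_drop_col s j : 1 < nth 0 s j -> removable (drop_col s) j = removable s j.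
Proof. by rewrite /removable !nth_drop_col; lia. Qed.

Lemma height_del_box s j : shape s -> removable s j -> 1 < nth 0 s j ->
  height (del_box s j) = height s.
Proof.
move=> s_s r_j gt1_j; apply: heightE => [|i]; first exact: shape_del_box.
by rewrite nth_del_box -nth_gt0_height //; case: eqP => [->|]; lia.
Qed.

Section LastCellOfColumn.

Variables (s : seq nat) (j : nat).
Hypotheses (s_s : shape s) (r_j : removable s j) (one_j : nth 0 s j = 1).

Lemma height_last_cell : height s = j.+1.
Proof.
apply: heightE => // i; case: (ltnP j i) => [lt_ji | le_ij].
  by have := shape_nth_mono s_s lt_ji; move: r_j; rewrite /removable one_j; lia.
by have := shape_nth_mono s_s le_ij; rewrite one_j; lia.
Qed.

Lemma height_del_last_cell : height (del_box s j) = j.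
Proof.
apply: heightE => [|i]; first exact: shape_del_box.
rewrite nth_del_box one_j; case: eqP => [->|ne]; first by rewrite ltnn.
by rewrite nth_gt0_height // height_last_cell; lia.
Qed.

Lemma drop_col_del_last_cell : drop_col (del_box s j) = drop_col s.
Proof.
apply: (@eq_from_nth _ 0) => [|i _].
  by rewrite !size_map size_set_nth; apply/maxn_idPr; rewrite nth_gt0_size ?one_j.
by rewrite !nth_drop_col nth_del_box; case: eqP => [->|]; rewrite ?one_j.
Qed.

End LastCellOfColumn.

Lemma npaths_drop_col_le n lam : shape lam -> sumn lam = n ->
  npaths n lam <= 'C(n, height lam) * npaths (n - height lam) (drop_col lam).
Proof.
elim: n lam => [|n IH] lam s_lam sz_lam.
  have -> := shape_sumn0 s_lam sz_lam.
  have -> : height empty_shape = 0 by apply: heightE shape_empty _ => i; rewrite nth_nseq if_same.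
  by rewrite /drop_col map_nseq bin0 mul1n.
set h := height lam; set mu := drop_col lam; have /shapeP [sz _] := s_lam.
have h_gt0 : 0 < h by rewrite -nth_gt0_height // shape_row0_gt0 // sz_lam.
have lt_h1 : h.-1 < N by rewrite prednK // -sz; exact: index_size.
(* A removable corner in a row of length 1 is the bottom cell of the first column. *)
rewrite npathsS // (bigID (fun j => nth 0 lam j == 1)) /=; apply: leq_add_binS => //.
  rewrite (sum_natD1 _ _ lt_h1) big_pred0 ?addn0 => [|j].
    case: ifP => // /andP [r_h /eqP one_h]; have := IH _ (shape_del_box s_lam r_h).
    rewrite sumn_del_box ?one_h // sz_lam height_del_last_cell //.
    rewrite drop_col_del_last_cell // => /(_ erefl).
    by have -> : n - h.-1 = n.+1 - h by lia.
  case: (boolP (removable lam j && _)) => //= /andP [r_j /eqP one_j].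
  by rewrite /h (height_last_cell s_lam r_j one_j) eqxx.
apply: (@leq_trans (\sum_(0 <= j < N | removable mu j) 'C(n, h) * npaths (n - h) (del_box mu j))).
  rewrite [X in X <= _]big_mkcond [X in _ <= X]big_mkcond /=; apply: leq_sum => j _.
  case: (boolP (removable lam j)) => //= r_j; case: eqP => //= /eqP ne1.
  have gt1_j : 1 < nth 0 lam j by have := removable_gt0 r_j; lia.
  rewrite removable_drop_col //; have := IH _ (shape_del_box s_lam r_j).
  by rewrite sumn_del_box ?removable_gt0 // sz_lam height_del_box // drop_col_del_box r_j => /(_ erefl).
rewrite -big_distrr /=; have [le_hn | lt_nh] := leqP h n; last by rewrite bin_small // !mul0n.
by rewrite leq_mul // (subSn le_hn) (npathsS _ (shape_drop_col s_lam)).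
Qed.

Lemma is_sytP p lam (t : {ffun 'I_p -> 'I_p * 'I_p}) :
  reflect [/\ injective t, forall k, in_diagram lam ((t k).1 : nat, (t k).2 : nat) &
              forall k l, (t k).1 <= (t l).1 -> (t k).2 <= (t l).2 -> k <= l]
          (is_syt lam t).
Proof.
apply: (iffP and3P) => [[/injectiveP t_inj /forallP t_diag /forallP t_mono] |
                        [t_inj t_diag t_mono]].
  by split=> // k l le1 le2; have /forallP/(_ l)/implyP := t_mono k; apply; rewrite le1 le2.
split; [exact/injectiveP | exact/forallP |].
by apply/forallP => k; apply/forallP => l; apply/implyP => /andP [le1 le2]; exact: t_mono.
Qed.

Lemma card_diagram_le p lam :
  #|[set x : 'I_p * 'I_p | in_diagram lam (x.1 : nat, x.2 : nat)]| <= sumn lam.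
Proof.
rewrite -sum1_card (eq_bigl (fun x : 'I_p * 'I_p => in_diagram lam (x.1 : nat, x.2 : nat))).
  2: by move=> x; rewrite inE.
rewrite big_mkcond /= -(pair_big xpredT xpredT (fun i j : 'I_p =>
  if in_diagram lam (i : nat, j : nat) then 1 else 0)) /=.
apply: leq_trans (sum_nth_le_sumn p lam); apply: leq_sum => i _.
apply: (@leq_trans (\sum_(c < p) (c < nth 0 lam i : nat))).
  by apply: leq_sum => c _; rewrite /in_diagram /=; case: (i < size lam); case: (c < nth 0 lam i).
by rewrite sum_ord_ltn geq_minl.
Qed.

Lemma in_diagram_lt p lam r c : shape lam -> sumn lam = p -> in_diagram lam (r, c) ->
  r < p /\ c < p.
Proof.
move=> s_lam <- /andP [/= lt_r lt_c]; split; last exact: leq_trans lt_c (nth_le_sumn _ _).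
by apply: leq_trans (height_le_sumn lam); rewrite -nth_gt0_height //; lia.
Qed.

(* A tableau has exactly #cells entries, so its cell map is onto the diagram. *)
Lemma syt_onto p lam (t : {ffun 'I_p -> 'I_p * 'I_p}) : shape lam -> sumn lam = p ->
  is_syt lam t -> forall r c, in_diagram lam (r, c) ->
  exists k, (t k).1 = r :> nat /\ (t k).2 = c :> nat.
Proof.
move=> s_lam sz_lam /is_sytP [t_inj t_diag _] r c rc_in.
set D := [set x : 'I_p * 'I_p | in_diagram lam (x.1 : nat, x.2 : nat)].
have image_t : [set t k | k : 'I_p] = D.
  apply/eqP; rewrite eqEcard card_imset // ?cardsT card_ord; apply/andP; split.
    by apply/fintype.subsetP => x /imsetP [k _ ->]; rewrite inE t_diag.
  by rewrite -[X in _ <= X]sz_lam card_diagram_le.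
have [lt_r lt_c] := in_diagram_lt s_lam sz_lam rc_in.
have : (Ordinal lt_r, Ordinal lt_c) \in D by rewrite inE.
by rewrite -image_t => /imsetP [k _ e]; exists k; rewrite -e.
Qed.

Lemma syt_last_corner m lam (t : {ffun 'I_m.+1 -> 'I_m.+1 * 'I_m.+1}) :
  shape lam -> sumn lam = m.+1 -> is_syt lam t ->
  ((t ord_max).2 : nat).+1 = nth 0 lam (t ord_max).1 /\ removable lam (t ord_max).1.
Proof.
move=> s_lam sz_lam t_syt; have [_ t_diag t_mono] := is_sytP _ _ t_syt.
have onto := syt_onto s_lam sz_lam t_syt.
have max_k (k : 'I_m.+1) : (ord_max : 'I_m.+1) <= k -> k = ord_max.
  by move=> le_k; apply: val_inj => /=; have := ltn_ord k; move: le_k => /=; lia.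
have /andP [/= lt_r lt_c] := t_diag ord_max.
split.
  apply/eqP; rewrite eqn_leq lt_c /= leqNgt; apply/negP => lt_c1.
  have [k [e1 e2]] := onto (t ord_max).1 ((t ord_max).2).+1 (introT andP (conj lt_r lt_c1)).
  have := t_mono ord_max k; rewrite e1 e2 => /(_ (leqnn _) (leqnSn _)) /max_k ek.
  by move: e2; rewrite ek; lia.
rewrite /removable ltnNge; apply/negP => le_c.
have lt_r1 : (t ord_max).1.+1 < size lam.
  by apply: nth_gt0_size; move: lt_c le_c; lia.
have [k [e1 e2]] :=
  onto ((t ord_max).1).+1 (t ord_max).2 (introT andP (conj lt_r1 (leq_trans lt_c le_c))).
have := t_mono ord_max k; rewrite e1 e2 => /(_ (leqnSn _) (leqnn _)) /max_k ek.
by move: e1; rewrite ek; lia.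
Qed.

(* The default k of insubd is never used: the entries below m fill a shape with m cells,
   so their coordinates are below m. *)
Definition syt_restr m (t : {ffun 'I_m.+1 -> 'I_m.+1 * 'I_m.+1}) : {ffun 'I_m -> 'I_m * 'I_m} :=
  [ffun k : 'I_m => (insubd k ((t (widen_ord (leqnSn m) k)).1 : nat),
                     insubd k ((t (widen_ord (leqnSn m) k)).2 : nat))].

Section RestrictTableau.

Variables (m : nat) (lam : seq nat) (t : {ffun 'I_m.+1 -> 'I_m.+1 * 'I_m.+1}).
Hypotheses (s_lam : shape lam) (sz_lam : sumn lam = m.+1) (t_syt : is_syt lam t).

Let corner := (t ord_max).1.
Let cell k := t (widen_ord (leqnSn m) k).

Lemma syt_restrE (k : 'I_m) :
  [/\ in_diagram (del_box lam corner) ((cell k).1 : nat, (cell k).2 : nat),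
      (syt_restr t k).1 = (cell k).1 :> nat & (syt_restr t k).2 = (cell k).2 :> nat].
Proof.
rewrite /cell /corner; set x := t (widen_ord _ _).
have [t_inj t_diag _] := is_sytP _ _ t_syt.
have [last_c r_corner] := syt_last_corner s_lam sz_lam t_syt.
have ne_max : x <> t ord_max by move/t_inj/(congr1 val) => /= e; have := ltn_ord k; lia.
have in_del : in_diagram (del_box lam (t ord_max).1) (x.1 : nat, x.2 : nat).
  have /andP [/= lt_r lt_c] := t_diag (widen_ord (leqnSn m) k).
  rewrite /in_diagram /= size_set_nth (maxn_idPr (nth_gt0_size (removable_gt0 r_corner))).
  rewrite lt_r /= nth_del_box; case: eqP => [e|_]; last by [].
  have ne2 : x.2 != (t ord_max).2 :> nat by apply/eqP => e2; apply: ne_max; exact: pair_nat_inj.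
  by move: lt_c ne2; rewrite -/x e -last_c /=; lia.
have sz_del : sumn (del_box lam (t ord_max).1) = m by rewrite sumn_del_box ?removable_gt0 ?sz_lam.
have [lt1 lt2] := in_diagram_lt (shape_del_box s_lam r_corner) sz_del in_del.
by split => //; rewrite /syt_restr ffunE /= val_insubd -/x ?lt1 ?lt2.
Qed.

Lemma is_syt_restr : is_syt (del_box lam corner) (syt_restr t).
Proof.
have [t_inj _ t_mono] := is_sytP _ _ t_syt.
apply/is_sytP; split=> [k1 k2 e | k | k l].
- have [_ a1 a2] := syt_restrE k1; have [_ b1 b2] := syt_restrE k2.
  have : cell k1 = cell k2 by apply: pair_nat_inj; rewrite -?a1 -?b1 -?a2 -?b2 e.
  by move/t_inj/(congr1 val) => /= ek; apply: val_inj.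
- by have [? -> ->] := syt_restrE k.
- by have [_ -> ->] := syt_restrE k; have [_ -> ->] := syt_restrE l; exact: t_mono.
Qed.

End RestrictTableau.

Lemma syt_restr_inj m lam (t1 t2 : {ffun 'I_m.+1 -> 'I_m.+1 * 'I_m.+1}) :
  shape lam -> sumn lam = m.+1 -> is_syt lam t1 -> is_syt lam t2 ->
  (t1 ord_max).1 = (t2 ord_max).1 -> syt_restr t1 = syt_restr t2 -> t1 = t2.
Proof.
move=> s_lam sz_lam t1_syt t2_syt e_corner e_restr; apply/ffunP => x.
case: (ltnP x m) => lt_x.
  have -> : x = widen_ord (leqnSn m) (Ordinal lt_x) by apply: val_inj.
  have [_ a1 a2] := syt_restrE s_lam sz_lam t1_syt (Ordinal lt_x).
  have [_ b1 b2] := syt_restrE s_lam sz_lam t2_syt (Ordinal lt_x).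
  by apply: pair_nat_inj; rewrite -?a1 -?b1 -?a2 -?b2 e_restr.
have -> : x = ord_max by apply: val_inj => /=; have := ltn_ord x; lia.
have [c1 _] := syt_last_corner s_lam sz_lam t1_syt.
have [c2 _] := syt_last_corner s_lam sz_lam t2_syt.
by apply: pair_nat_inj; [rewrite e_corner | move: c1 c2; rewrite e_corner => <- [->]].
Qed.

Lemma dim_irrepS_le m lam : shape lam -> sumn lam = m.+1 -> m.+1 <= N ->
  dim_irrep m.+1 lam <= \sum_(0 <= j < N | removable lam j) dim_irrep m (del_box lam j).
Proof.
move=> s_lam sz_lam le_mN; rewrite [X in X <= _]/dim_irrep -sum1_card.
pose corner (t : {ffun 'I_m.+1 -> 'I_m.+1 * 'I_m.+1}) := ((t ord_max).1 : 'I_m.+1).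
rewrite (partition_big corner xpredT) //=.
apply: (@leq_trans (\sum_(j < m.+1) removable lam j * dim_irrep m (del_box lam j))).
  apply: leq_sum => j _; case: (boolP (removable lam j)) => r_j; last first.
    rewrite big1 // => t; rewrite inE => /andP [t_syt /eqP e].
    by have [_ r] := syt_last_corner s_lam sz_lam t_syt; move: r_j; rewrite -e r.
  rewrite mul1n sum1dep_card; set S := [set x | _].
  have inj : {in S &, injective (@syt_restr m)}.
    move=> t1 t2; rewrite !inE => /andP [t1_syt /eqP e1] /andP [t2_syt /eqP e2].
    by apply: (syt_restr_inj s_lam sz_lam t1_syt t2_syt); rewrite /corner in e1 e2; rewrite e1 e2.
  rewrite -(card_in_imset inj) /dim_irrep; apply: subset_leq_card.
  apply/fintype.subsetP => u /imsetP [t]; rewrite !inE => /andP [t_syt /eqP <-] ->.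
  exact: is_syt_restr.
rewrite -(big_mkord xpredT (fun j => removable lam j * dim_irrep m (del_box lam j))).
rewrite [X in _ <= X]big_mkcond [X in _ <= X](@big_cat_nat _ _ _ m.+1) //=.
by apply: leq_trans (leq_addr _ _); apply: leq_sum => j _; case: (removable lam j); rewrite ?mul1n.
Qed.

Lemma dim_irrep_le_npaths m lam : shape lam -> sumn lam = m -> m <= N ->
  dim_irrep m lam <= npaths m lam.
Proof.
elim: m lam => [|m IH] lam s_lam sz_lam le_mN.
  rewrite (shape_sumn0 s_lam sz_lam) npaths0 eqxx /dim_irrep.
  by apply: leq_trans (max_card _) _; rewrite card_ffun card_ord expn0.
apply: leq_trans (dim_irrepS_le s_lam sz_lam le_mN) _; rewrite npathsS //.
rewrite big_nat_cond [X in _ <= X]big_nat_cond; apply: leq_sum => j /andP [_ r_j].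
apply: IH; [exact: shape_del_box | | lia].
by rewrite sumn_del_box ?removable_gt0 // sz_lam.
Qed.

End YoungLattice.

Definition pad (n : nat) (la : seq nat) := la ++ nseq (n - size la) 0.

Section Padding.

Variables (n : nat) (la : seq nat).
Hypothesis p_la : is_partition n la.

Lemma size_partition_le : size la <= n.
Proof. by case/and3P: p_la => _ pos /eqP <-; exact: size_le_sumn. Qed.

Lemma shape_pad : shape n (pad n la).
Proof.
case/and3P: p_la => sorted_la _ _; apply/shapeP; split=> [|i].
  by rewrite size_cat size_nseq; have := size_partition_le; lia.
rewrite !nth_cat; case: (ltnP i.+1 (size la)) => lt_i; last by rewrite nth_nseq if_same.
have geq_trans : transitive geq by move=> y x z le_yx le_zy; exact: leq_trans le_zy le_yx.
by rewrite (ltnW lt_i); apply: (sorted_ltn_nth geq_trans 0 sorted_la); rewrite ?inE // ltnW.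
Qed.

Lemma sumn_pad : sumn (pad n la) = n.
Proof. by case/and3P: p_la => _ _ /eqP <-; rewrite sumn_cat sumn_nseq mul0n addn0. Qed.

Lemma dim_irrep_pad : dim_irrep n (pad n la) = dim_irrep n la.
Proof.
have diagE c : in_diagram (pad n la) c = in_diagram la c.
  case: c => r c; rewrite /in_diagram /= size_cat nth_cat.
  case: (ltnP r (size la)) => lt_r; first by rewrite ltn_addr.
  by rewrite nth_nseq if_same ltn0 andbF; case: (r < _).
by apply: eq_card => t; rewrite !inE /is_syt (eq_forallb (fun k => diagE _)).
Qed.

Lemma nth_pad0 : nth 0 (pad n la) 0 = yd_width la.
Proof. by rewrite /pad /yd_width; case: la => [|x s] //=; rewrite nth_nseq if_same. Qed.

Lemma height_pad : height (pad n la) = yd_height la.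
Proof.
case/and3P: p_la => _ pos _; rewrite /height /yd_height index_cat.
have -> : (0 \in la) = false by apply/negbTE/negP => /(allP pos).
by case: (n - size la) => [|m] /=; rewrite addn0.
Qed.

End Padding.

Lemma dim_irrep_sq_le_width n la : is_partition n la ->
  dim_irrep n la * dim_irrep n la <=
    'C(n, yd_width la) * 'C(n, yd_width la) * (n - yd_width la)`!.
Proof.
move=> p_la; rewrite -dim_irrep_pad -(nth_pad0 n).
have [s_lam sz_lam] := (shape_pad p_la, sumn_pad p_la).
have d_le := dim_irrep_le_npaths s_lam sz_lam (leqnn n).
case: (posnP n) => [n0 | n_gt0].
  have -> : nth 0 (pad n la) 0 = 0 by have := nth_le_sumn (pad n la) 0; rewrite sz_lam n0; lia.
  by rewrite bin0 subn0 !mul1n; apply: leq_trans (leq_mul d_le d_le) _; exact: npaths_sq_le.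
apply: leq_sq_mul (leq_trans d_le (npaths_drop_row_le n_gt0 s_lam sz_lam)) _.
exact: npaths_sq_le (leq_subr _ _).
Qed.

Lemma dim_irrep_sq_le_height n la : is_partition n la ->
  dim_irrep n la * dim_irrep n la <=
    'C(n, yd_height la) * 'C(n, yd_height la) * (n - yd_height la)`!.
Proof.
move=> p_la; rewrite -dim_irrep_pad -(height_pad p_la).
have [s_lam sz_lam] := (shape_pad p_la, sumn_pad p_la).
have d_le := dim_irrep_le_npaths s_lam sz_lam (leqnn n).
apply: leq_sq_mul (leq_trans d_le (npaths_drop_col_le s_lam sz_lam)) _.
exact: npaths_sq_le (leq_subr _ _).
Qed.

Local Open Scope ring_scope.

Section RealBounds.

Variable R : realType.

Lemma expR_mul1B_le1 (x : R) : expR x * (1 - x) <= 1.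
Proof.
rewrite -[X in _ <= X](expRxMexpNx_1 x) ler_pM2l ?expR_gt0 //.
by have := expR_ge1Dx (- x); lra.
Qed.

Lemma ln2_gt : 3 / 5 < ln (2 : R).
Proof.
have b_le : expR (1 / 5 : R) <= 5 / 4 by have := expR_mul1B_le1 (1 / 5 : R); lra.
have e3 : expR (3 / 5 : R) = expR (1 / 5) ^+ 3 by rewrite -expRM_natl; congr expR; lra.
rewrite -[X in X < _]expRK ltr_ln ?posrE ?expR_gt0 // e3.
have b_ge0 := expR_ge0 (1 / 5 : R); nra.
Qed.

Lemma expR_5_2_lt : expR (5 / 2 : R) < 23.
Proof.
have a_le : expR (1 / 6 : R) <= 6 / 5 by have := expR_mul1B_le1 (1 / 6 : R); lra.
have -> : expR (5 / 2 : R) = expR (1 / 6) ^+ 15 by rewrite -expRM_natl; congr expR; lra.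
apply: (@le_lt_trans _ _ ((6 / 5) ^+ 15)).
  by apply: lerXn2r; rewrite ?nnegrE ?expR_ge0 //; lra.
by rewrite !exprS expr0; lra.
Qed.

Lemma expn_div_expR_le_fact k : (k%:R / expR 1 : R) ^+ k <= k`!%:R.
Proof.
case: k => [|k]; first by rewrite expr0 fact0.
have e_pow : expR k.+1%:R = expR 1 ^+ k.+1 :> R by rewrite -expRM_natl mulr1.
have := expR_ge1Dxn k (ler0n R k.+1); rewrite e_pow => le_e.
have le_div : k.+1%:R ^+ k.+1 / k.+1`!%:R <= expR 1 ^+ k.+1 :> R by lra.
by rewrite expr_div_n ler_pdivrMr ?exprn_gt0 ?expR_gt0 // mulrC -ler_pdivrMr ?ltr0n ?fact_gt0.
Qed.

Lemma fact_sq_lt_expn (a : R) (n k d : nat) : 0 <= a -> (k <= n)%N ->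
  (d * d <= 'C(n, k) * 'C(n, k) * (n - k)`!)%N ->
  a * Num.sqrt (n`!%:R) < d%:R -> a ^+ 2 * (k`!%:R) ^+ 2 < n%:R ^+ k.
Proof.
move=> a_ge0 le_kn le_d lt_d.
set C : R := 'C(n, k)%:R; set K : R := k`!%:R; set F : R := (n - k)`!%:R.
have [C_gt0 K_gt0 F_gt0] : [/\ 0 < C, 0 < K & 0 < F] by rewrite !ltr0n bin_gt0 !fact_gt0.
have n_fact : n`!%:R = C * K * F :> R by rewrite -!natrM -mulnA bin_fact.
have sq_lt : a ^+ 2 * (C * K * F) < C * C * F.
  have : (a * Num.sqrt (n`!%:R)) ^+ 2 < d%:R ^+ 2.
    by rewrite ltr_pXn2r // nnegrE ?mulr_ge0 ?sqrtr_ge0 ?ler0n.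
  rewrite exprMn sqr_sqrtr ?ler0n // n_fact => /lt_le_trans; apply.
  by rewrite /C /F -!natrM -natrX ler_nat expnS expn1.
have aK_lt : a ^+ 2 * K < C by rewrite -(ltr_pM2r (mulr_gt0 C_gt0 F_gt0)); lra.
have CK_le : C * K <= n%:R ^+ k by rewrite -natrM -natrX ler_nat bin_ffact ffact_le_expn.
have : 0 <= a ^+ 2 by exact: exprn_ge0.
nra.
Qed.

Lemma sqr_lt_of_fact_sq_lt (x : R) (k : nat) : (0 < k)%N -> 0 <= x ->
  expR (- (k%:R / 2)) * (k`!%:R) ^+ 2 < x ^+ k -> k%:R ^+ 2 < expR (5 / 2) * x.
Proof.
move=> k_gt0 x_ge0 lt_x.
set e := expR (1 : R); set g := expR (- (1 / 2) : R); set y := k%:R / e.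
have e_gt0 : 0 < e by exact: expR_gt0.
have y_ge0 : 0 <= y by rewrite divr_ge0 ?ler0n ?ltW.
have gk : g ^+ k = expR (- (k%:R / 2)) by rewrite -expRM_natl; congr expR; lra.
have pow_lt : (g * y ^+ 2) ^+ k < x ^+ k.
  rewrite exprMn exprAC gk; apply: le_lt_trans lt_x; rewrite ler_wpM2l ?expR_ge0 //.
  by apply: lerXn2r; rewrite ?nnegrE ?exprn_ge0 ?ler0n //; exact: expn_div_expR_le_fact.
have lt_gy : g * y ^+ 2 < x.
  have gy_ge0 : 0 <= g * y ^+ 2 by rewrite mulr_ge0 ?expR_ge0 ?exprn_ge0.
  by move: pow_lt; rewrite ltr_pXn2r ?nnegrE.
have eg : expR (5 / 2) * g = e ^+ 2 by rewrite -expRD -expRM_natl; congr expR; lra.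
have -> : k%:R ^+ 2 = expR (5 / 2) * (g * y ^+ 2).
  by rewrite mulrA eg /y expr_div_n mulrC -mulrA mulVf ?mulr1 // expf_neq0 // gt_eqF.
by rewrite ltr_pM2l ?expR_gt0.
Qed.

Lemma ln_nat_gt_3_5 (n : nat) : (2 <= n)%N -> 3 / 5 < ln (n%:R : R).
Proof.
by move=> le_2n; apply: lt_le_trans ln2_gt _; rewrite ler_ln ?posrE ?ltr0n ?ler_nat //; lia.
Qed.

Lemma ln_nat_gt_6_5 (n : nat) : (4 <= n)%N -> 6 / 5 < ln (n%:R : R).
Proof.
move=> le_4n; apply: (@lt_le_trans _ _ (ln (4 : R))); last first.
  by rewrite ler_ln ?posrE ?ltr0n ?ler_nat //; lia.
by rewrite (_ : 4 = 2 * 2) ?lnM ?posrE //; [have := ln2_gt; lra | lra].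
Qed.

Lemma expR_5_2_lt_sq_four_sqrt_ln (n : nat) : (4 <= n)%N ->
  expR (5 / 2) * n%:R < (4 * Num.sqrt (n%:R : R) * ln n%:R) ^+ 2.
Proof.
move=> le_4n; have L_gt := ln_nat_gt_6_5 le_4n.
have n_gt0 : 0 < n%:R :> R by rewrite ltr0n; lia.
have -> : (4 * Num.sqrt (n%:R : R) * ln n%:R) ^+ 2 = 16 * ln n%:R ^+ 2 * n%:R.
  by rewrite !exprMn sqr_sqrtr ?ler0n //; ring.
by rewrite ltr_pM2r //; apply: lt_trans expR_5_2_lt _; nra.
Qed.

Lemma lt_four_sqrt_ln (n k : nat) : (k <= n)%N ->
  expR (- (Num.sqrt (n%:R : R) * ln n%:R)) ^+ 2 * (k`!%:R) ^+ 2 < n%:R ^+ k ->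
  k%:R < 4 * Num.sqrt (n%:R : R) * ln n%:R.
Proof.
set q := Num.sqrt (n%:R : R); set L := ln (n%:R : R) => le_kn lt_n.
have q_ge0 : 0 <= q := sqrtr_ge0 _; have qq : q ^+ 2 = n%:R := sqr_sqrtr (ler0n _ _).
rewrite ltNge; apply/negP => le_k.
have [le_n1 | lt_1n] := leqP n 1.
  have s0 : q * L = 0.
    rewrite /q /L; have [-> | ->] : n = 0%N \/ n = 1%N by lia.
      by rewrite sqrtr0 mul0r.
    by rewrite ln1 mulr0.
  move: lt_n; rewrite s0 oppr0 expR0 expr1n mul1r ltNge => /negP; apply.
  apply: (@le_trans _ _ 1); first by rewrite exprn_ile1 ?ler0n ?lern1.
  by rewrite exprn_ege1 // ler1n fact_gt0.
have [lt_n4 | le_4n] := ltnP n 4.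
  have L_gt : 3 / 5 < L := ln_nat_gt_3_5 lt_1n.
  have le_k3 : k%:R <= 3 :> R by rewrite ler_nat; lia.
  have ge_n2 : 2 <= n%:R :> R by rewrite ler_nat.
  have gt_q : 7 / 5 < q by nra.
  nra.
have L_gt : 6 / 5 < L := ln_nat_gt_6_5 le_4n.
have q_gt0 : 0 < q by rewrite sqrtr_gt0 ltr0n; lia.
have sL_gt0 : 0 < 4 * q * L by rewrite !mulr_gt0 //; lra.
have k_gt0 : (0 < k)%N by rewrite -(ltr0n R); apply: lt_le_trans le_k.
have E_ge : expR (- (k%:R / 2)) <= expR (- (q * L)) ^+ 2.
  have qL4 : 4 * q * L = 4 * (q * L) by ring.
  by rewrite -expRM_natl ler_expR; lra.
have lt_sq := sqr_lt_of_fact_sq_lt k_gt0 (ler0n _ n)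
  (le_lt_trans (ler_wpM2r (exprn_ge0 _ (ler0n _ _)) E_ge) lt_n).
have gt_sq : expR (5 / 2) * n%:R < (4 * q * L) ^+ 2 := expR_5_2_lt_sq_four_sqrt_ln le_4n.
have le_sq : (4 * q * L) ^+ 2 <= k%:R ^+ 2 by rewrite lerXn2r ?nnegrE ?ler0n // ltW.
lra.
Qed.

End RealBounds.

Theorem lemma5 (R : realType) (n : nat) (la : seq nat) :
  is_partition n la ->
  expR (- (Num.sqrt (n%:R : R) * ln (n%:R : R))) * Num.sqrt ((n`!)%:R : R)
    < (dim_irrep n la)%:R ->
  (yd_width la)%:R < 4 * Num.sqrt (n%:R : R) * ln (n%:R : R) /\
  (yd_height la)%:R < 4 * Num.sqrt (n%:R : R) * ln (n%:R : R).
Proof.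
move=> p_la lt_dim.
have bound k : (k <= n)%N ->
    (dim_irrep n la * dim_irrep n la <= 'C(n, k) * 'C(n, k) * (n - k)`!)%N ->
    k%:R < 4 * Num.sqrt (n%:R : R) * ln (n%:R : R).
  move=> le_kn le_dim.
  exact: lt_four_sqrt_ln le_kn (fact_sq_lt_expn (expR_ge0 _) le_kn le_dim lt_dim).
split; apply: bound.
- by rewrite -(nth_pad0 n) -[X in (_ <= X)%N](sumn_pad p_la) nth_le_sumn.
- exact: dim_irrep_sq_le_width.
- exact: size_partition_le.
- exact: dim_irrep_sq_le_height.
Qed.
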